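(* Let $k$ be an odd integer with $k\ge 5$, let $D$ be a strong $k$-quasi-transitive digraph with $\mathrm{diam}(D)\ge k+2$, let $u,v\in V(D)$ with $d(u,v)=k+2$, and let $P$ be a shortest $(u,v)$-path. Let $I=\{x\in V(D)\setminus V(P): x\Rightarrow V(P)\}$, $W=\{x\in V(D)\setminus V(P): V(P)\Rightarrow x\}$ and $B=V(D)\setminus(V(P)\cup I\cup W)$. If $D[V(P)]$ is a semicomplete bipartite digraph, then $D[B]$ is either a semicomplete bipartite digraph or an empty digraph.
   Context: All digraphs are finite, without loops or multiple arcs (opposite arcs allowed). Vertices $x,y$ are adjacent if $xy$ or $yx$ is an arc. For vertex sets $X,Y$ (singletons identified with vertices), $X\Rightarrow Y$ means there is no arc from $Y$ to $X$. For $k\ge 2$, $D$ is $k$-quasi-transitive if for every path $x_0x_1\ldots x_k$ of length $k$, $x_0$ and $x_k$ are adjacent. $d(x,y)$ is the length of a shortest $(x,y)$-path, $\mathrm{diam}(D)=\max_{x,y}d(x,y)$. $D[S]$ is the induced subdigraph. A semicomplete bipartite digraph: there is a bipartition $(X,Y)$ of the vertex set with no arcs inside $X$ or $Y$ and every vertex of $X$ adjacent to every vertex of $Y$. An empty digraph is one with no arcs. *)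

From mathcomp Require Import all_boot.
Set Implicit Arguments. Unset Strict Implicit. Unset Printing Implicit Defensive.

(* A digraph is a finite vertex type T with an arc relation A : rel T
   (A x y = there is an arc x -> y); loops are excluded by a separate
   irreflexivity hypothesis; opposite arcs are allowed. *)

Section Digraph.
Variables (T : finType) (A : rel T).

Definition adjacent (x y : T) : bool := A x y || A y x.

(* A path x :: p : consecutive arcs and pairwise distinct vertices.
   Its length is size p; it goes from x to last x p. *)
Definition is_dpath (x : T) (p : seq T) : bool := path A x p && uniq (x :: p).

Definition k_quasi_transitive (k : nat) : Prop :=
  forall x p, size p = k -> is_dpath x p -> adjacent x (last x p).

Definition strong : Prop := forall x y : T, connect A x y.

Definition is_dist (x y : T) (n : nat) : Prop :=
  (exists p, [/\ is_dpath x p, last x p = y & size p = n]) /\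
  (forall p, is_dpath x p -> last x p = y -> n <= size p).

Definition diam_ge (m : nat) : Prop :=
  exists x y n, is_dist x y n /\ m <= n.

Definition shortest_path (x y : T) (p : seq T) : Prop :=
  [/\ is_dpath x p, last x p = y &
      forall q, is_dpath x q -> last x q = y -> size p <= size q].

Definition dom (X Y : {set T}) : bool := [forall x in X, forall y in Y, ~~ A y x].

Definition semicomplete_bipartite (S : {set T}) : Prop :=
  exists X Y : {set T},
    [/\ X :|: Y = S, [disjoint X & Y],
        (forall x y, x \in X -> y \in X -> ~~ A x y),
        (forall x y, x \in Y -> y \in Y -> ~~ A x y) &
        (forall x y, x \in X -> y \in Y -> adjacent x y)].

Definition empty_digraph (S : {set T}) : Prop :=
  forall x y, x \in S -> y \in S -> ~~ A x y.

End Digraph.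

From mathcomp Require Import all_boot zify.
Set Implicit Arguments. Unset Strict Implicit. Unset Printing Implicit Defensive.

(* Write P = x_0 ... x_(k+2). As D[V(P)] is semicomplete bipartite, x_i and x_j are adjacent
   exactly when i - j is odd, and since P is shortest the arc then points backwards once
   |i - j| >= 3. A vertex z of B has an in- and an out-neighbour on P. Gluing the arcs at z to
   segments of P and to backward chords gives paths of length exactly k through z, whose ends
   must be adjacent: this either forces new neighbours of z on P or, when both ends are on P
   with indices of equal parity, is impossible. Hence all P-neighbours of z share one parity t,
   and z is adjacent to x_t, x_(t+2), x_(k-1+t) and x_(k+1+t). An arc x -> y inside B with x, y
   of equal parity t would give a k-path x -> y -> x_j -> ... -> x_(j+k-2) ending at parity
   1 - t; if x, y have different parities and are not adjacent, the k-paths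
   x -> x_j -> ... -> x_(j+k-2) -> y and their mirror images leave no orientation for the arcs
   between x, y and those four vertices. So B splits by parity into a semicomplete bipartite
   digraph. *)

(* [lia] after clearing the non-arithmetic hypotheses, which make it very slow. *)
Ltac nat_lia :=
  repeat match goal with H : ?P |- _ => lazymatch P with
  | nat => fail | @eq _ _ _ => fail | ~ (@eq _ _ _) => fail
  | is_true (leq _ _) => fail | is_true (leq _ _ && leq _ _) => fail
  | is_true (~~ (_ == _)) => fail | is_true (odd _) => fail | _ => clear H end end; lia.

Lemma last_iota h l : last h (iota h.+1 l) = h + l.
Proof. by elim: l h => [|l IH] h /=; rewrite ?addn0 // IH addnS. Qed.

Lemma has_mem_iota a l1 b l2 :
  has (mem (iota a l1)) (iota b l2) = [&& 0 < l1, 0 < l2, a < b + l2 & b < a + l1].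
Proof.
apply/hasP/idP => [[x]|H]; first by rewrite /= !mem_iota; lia.
by exists (maxn a b); rewrite /= mem_iota; lia.
Qed.

Ltac solve_uniq := rewrite /=;
  repeat rewrite ?cat_uniq ?cons_uniq ?iota_uniq ?mem_cat ?in_cons ?mem_iota ?has_cat
    ?has_mem_iota /=;
  rewrite ?in_nil ?orbF ?andbT; nat_lia.

Ltac solve_all := apply/allP => ? /=;
  repeat rewrite ?mem_cat ?in_cons ?mem_iota /=; rewrite ?in_nil ?orbF; nat_lia.

Ltac solve_size := repeat rewrite ?size_cat ?size_iota /=; nat_lia.

Lemma adjacentC (T : finType) (A : rel T) x y : adjacent A x y = adjacent A y x.
Proof. exact: orbC. Qed.

Lemma semicomplete_bipartite_subset (T : finType) (A : rel T) (S S' : {set T}) :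
  S' \subset S -> semicomplete_bipartite A S -> semicomplete_bipartite A S'.
Proof.
move=> sub [X [Y [XY dXY noX noY adjXY]]].
exists (X :&: S'), (Y :&: S'); split.
- by rewrite -setIUl XY; apply/setIidPr.
- exact: disjointWl (subsetIl _ _) (disjointWr (subsetIl _ _) dXY).
- by move=> x y /setIP[hx _] /setIP[hy _]; apply: noX.
- by move=> x y /setIP[hx _] /setIP[hy _]; apply: noY.
- by move=> x y /setIP[hx _] /setIP[hy _]; apply: adjXY.
Qed.

Lemma shortest_path_size (T : finType) (A : rel T) u v p n :
  is_dist A u v n -> shortest_path A u v p -> size p = n.
Proof.
move=> [[q [q_dpath q_last q_size]] dist_min] [p_dpath p_last p_min].
by apply/eqP; rewrite eqn_leq -{1}q_size p_min // dist_min.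
Qed.

Section ShortestPath.
Variables (T : finType) (A : rel T) (k : nat) (u v : T) (p : seq T).
Hypothesis kqt : k_quasi_transitive A k.
Hypothesis p_shortest : shortest_path A u v p.
Hypothesis size_p : size p = k.+2.

Local Notation n := k.+2.

Definition vP i := nth u (u :: p) i.

(* P extended by the vertices of [s], numbered k+3, k+4, ...; paths through them are built as
   duplicate-free index lists. *)
Definition ext (s : seq T) i := nth u (u :: p ++ s) i.

Lemma ext_vP s i : i <= n -> ext s i = vP i.
Proof. by move=> hi; rewrite /ext -cat_cons nth_cat /= size_p ltnS hi. Qed.

Lemma ext_next z s : ext (z :: s) n.+1 = z.
Proof. by rewrite /ext /= nth_cat size_p ltnn subnn. Qed.

Lemma ext_next2 y z s : ext (y :: z :: s) n.+2 = z.
Proof. by rewrite /ext /= nth_cat size_p ltnNge leqnSn subSnn. Qed.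

Lemma p_dpath : is_dpath A u p.
Proof. by case: p_shortest. Qed.

Lemma vP_last : vP n = v.
Proof.
case: p_shortest => _ <- _.
by rewrite /vP -size_p -[size p]/((size (u :: p)).-1) nth_last.
Qed.

Lemma mem_vP i : i <= n -> vP i \in u :: p.
Proof. by move=> hi; apply: mem_nth; rewrite /= size_p ltnS. Qed.

Lemma vP_of_mem z : z \in u :: p -> exists2 i, i <= n & z = vP i.
Proof.
move=> hz; exists (index z (u :: p)); last by rewrite /vP nth_index.
by rewrite -ltnS -size_p -[(size p).+1]/(size (u :: p)) index_mem.
Qed.

Lemma vP_arc i : i < n -> A (vP i) (vP i.+1).
Proof.
by case/andP: p_dpath => /(pathP u) /(_ i); rewrite size_p /vP /= => H _ /H.
Qed.

Lemma ext_uniq s : [disjoint u :: p & s] -> uniq s -> uniq (u :: p ++ s).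
Proof.
case/andP: p_dpath => _ U dis Us.
rewrite -cat_cons cat_uniq U Us -all_predC /= andbT.
by apply/allP => x xs; rewrite /= (disjointFl dis xs).
Qed.

Section Extension.
Variable s : seq T.
Hypothesis ps_uniq : uniq (u :: p ++ s).

Lemma ext_inj L : all (fun i => i < n.+1 + size s) L -> {in L &, injective (ext s)}.
Proof.
move=> /allP L_bd i j /L_bd hi /L_bd hj /eqP.
have size_ps : size (u :: p ++ s) = n.+1 + size s by rewrite /= size_cat size_p.
by rewrite /ext nth_uniq ?size_ps // => /eqP.
Qed.

Lemma ext_dpath h L :
  all (fun i => i < n.+1 + size s) (h :: L) -> uniq (h :: L) ->
  path (relpre (ext s) A) h L -> is_dpath A (ext s h) (map (ext s) L).
Proof.
move=> L_bd L_uniq L_path; apply/andP; split; first by rewrite path_map.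
by rewrite -map_cons (map_inj_in_uniq (ext_inj L_bd)).
Qed.

Lemma ext_adjacent h L :
  all (fun i => i < n.+1 + size s) (h :: L) -> uniq (h :: L) ->
  path (relpre (ext s) A) h L -> size L = k -> adjacent A (ext s h) (ext s (last h L)).
Proof.
move=> L_bd L_uniq L_path L_size; rewrite -last_map.
by apply: kqt; [rewrite size_map | exact: ext_dpath].
Qed.

Lemma ext_shortest L :
  all (fun i => i < n.+1 + size s) (0 :: L) -> uniq (0 :: L) ->
  path (relpre (ext s) A) 0 L -> last 0 L = n -> n <= size L.
Proof.
move=> L_bd L_uniq L_path L_last; rewrite -size_p -(size_map (ext s)).
case: p_shortest => _ _; apply; rewrite -[u]/(ext s 0); first exact: ext_dpath.
by rewrite last_map L_last ext_vP // vP_last.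
Qed.

End Extension.

Lemma path_iota_vP s h l : h + l <= n -> path (relpre (ext s) A) h (iota h.+1 l).
Proof.
elim: l h => [|l IH] h //= hl.
by rewrite !ext_vP ?vP_arc ?IH; nat_lia.
Qed.

Lemma p_uniq : uniq (u :: p ++ [::]).
Proof. by rewrite cats0; case/andP: p_dpath. Qed.

Lemma no_forward_chord a b : a.+2 <= b -> b <= n -> ~~ A (vP a) (vP b).
Proof.
move=> ab bn; apply/negP => a_b.
set L := iota 1 a ++ b :: iota b.+1 (n - b).
suff : n <= size L by rewrite /L size_cat /= !size_iota; nat_lia.
apply: (ext_shortest p_uniq); rewrite /L.
- by solve_all.
- by solve_uniq.
- rewrite cat_path path_iota_vP //= ?last_iota; last nat_lia.
  by rewrite !ext_vP ?a_b ?path_iota_vP //; nat_lia.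
- by rewrite last_cat /= last_iota; nat_lia.
Qed.

Hypotheses (k_odd : odd k) (k_ge5 : 5 <= k).
Hypothesis VP_bip : semicomplete_bipartite A [set x | x \in u :: p].

Lemma vP_adjacent i j : i <= n -> j <= n -> adjacent A (vP i) (vP j) = (i %% 2 != j %% 2).
Proof.
case: VP_bip => X [Y] [XY dXY noX noY adjXY] hi hj.
have inY i0 : i0 <= n -> (vP i0 \in Y) = (vP i0 \notin X).
  move=> hi0; have : vP i0 \in X :|: Y by rewrite XY inE mem_vP.
  by rewrite inE; case: (boolP (vP i0 \in X)) => // /(disjointFr dXY).
have inX i0 : i0 <= n -> (vP i0 \in X) = (vP 0 \in X) (+) odd i0.
  elim: i0 => [|i0 IH] hi0; first by rewrite addbF.
  rewrite /= addbN -IH ?(ltnW hi0) //.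
  have a := vP_arc hi0.
  case: (boolP (vP i0 \in X)) => hX; case: (boolP (vP i0.+1 \in X)) => hX' //.
  - by move: (noX _ _ hX hX'); rewrite a.
  - have hY : vP i0 \in Y by rewrite inY ?hX ?(ltnW hi0).
    have hY' : vP i0.+1 \in Y by rewrite inY ?hX'.
    by move: (noY _ _ hY hY'); rewrite a.
have -> : (i %% 2 != j %% 2) = ((vP i \in X) != (vP j \in X)).
  by rewrite !modn2 inX // (inX j) //; case: (vP 0 \in X); case: (odd i); case: (odd j).
case: (boolP (vP i \in X)) => hiX; case: (boolP (vP j \in X)) => hjX /=.
- by rewrite /adjacent (negbTE (noX _ _ hiX hjX)) (negbTE (noX _ _ hjX hiX)).
- by apply: adjXY; rewrite // inY.
- by rewrite /adjacent orbC; apply: adjXY; rewrite // inY.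
- rewrite -inY // in hiX; rewrite -inY // in hjX.
  by rewrite /adjacent (negbTE (noY _ _ hiX hjX)) (negbTE (noY _ _ hjX hiX)).
Qed.

Lemma backward_chord a b : a < b -> b <= n -> (b - a) %% 2 = 1 -> 3 <= b - a -> A (vP b) (vP a).
Proof.
move=> ab bn odd_ba ba3.
have := vP_adjacent (_ : a <= n) bn.
rewrite /adjacent (negbTE (no_forward_chord _ bn)) /=; last nat_lia.
by move=> ->; nat_lia.
Qed.

Lemma path_chord s j b a m :
  j <= b -> b <= n -> a <= m -> m < j -> (b - a) %% 2 = 1 -> 3 <= b - a ->
  path (relpre (ext s) A) j (iota j.+1 (b - j) ++ a :: iota a.+1 (m - a)).
Proof.
move=> jb bn am mj odd_ba ba3.
rewrite cat_path path_iota_vP //=; last nat_lia.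
rewrite last_iota (_ : j + (b - j) = b); last nat_lia.
by rewrite !ext_vP ?backward_chord ?path_iota_vP //; nat_lia.
Qed.

Section OutsideVertex.
Variable z : T.
Hypothesis z_notin : z \notin u :: p.

Local Notation w := (ext [:: z]).

Lemma uniq_z : uniq (u :: p ++ [:: z]).
Proof. by apply: ext_uniq => //; rewrite disjoint_sym disjoint_has /= orbF. Qed.

Lemma in_out_gap i j : i <= n -> j <= n -> A (vP i) z -> A z (vP j) -> j <= i + 2.
Proof.
move=> hi hj ai aj; rewrite leqNgt; apply/negP => hij.
set L := iota 1 i ++ n.+1 :: j :: iota j.+1 (n - j).
suff : n <= size L by rewrite /L size_cat /= !size_iota; nat_lia.
apply: (ext_shortest uniq_z); rewrite /L.
- by solve_all.
- by solve_uniq.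
- rewrite cat_path path_iota_vP //= last_iota ext_next !ext_vP ?ai ?aj ?path_iota_vP //; nat_lia.
- by rewrite last_cat /= last_iota; nat_lia.
Qed.

Lemma adj_out_chord j b a m : A z (vP j) -> j <= b -> b <= n -> a <= m -> m < j ->
  (b - a) %% 2 = 1 -> 3 <= b - a -> (b - j) + (m - a) + 2 = k -> adjacent A (vP m) z.
Proof.
move=> aj jb bn am mj odd_ba ba3 sk.
set L := j :: iota j.+1 (b - j) ++ a :: iota a.+1 (m - a).
have L_bd : all (fun i => i < n.+1 + size [:: z]) (n.+1 :: L) by rewrite /L; solve_all.
have L_uniq : uniq (n.+1 :: L) by rewrite /L; solve_uniq.
have L_path : path (relpre w A) n.+1 L.
  by rewrite /L /= ext_next ext_vP ?aj ?path_chord //; nat_lia.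
have L_size : size L = k by rewrite /L; solve_size.
have := ext_adjacent uniq_z L_bd L_uniq L_path L_size.
rewrite /L /= last_cat /= last_iota ext_next (_ : a + (m - a) = m); last nat_lia.
by rewrite ext_vP 1?adjacentC //; nat_lia.
Qed.

Lemma adj_in_chord i b a m : A (vP i) z -> m <= b -> b <= n -> a <= i -> i < m ->
  (b - a) %% 2 = 1 -> 3 <= b - a -> (b - m) + (i - a) + 2 = k -> adjacent A (vP m) z.
Proof.
move=> ai mb bn ai' im odd_ba ba3 sk.
set L := iota m.+1 (b - m) ++ a :: iota a.+1 (i - a) ++ [:: n.+1].
have L_bd : all (fun i => i < n.+1 + size [:: z]) (m :: L) by rewrite /L; solve_all.
have L_uniq : uniq (m :: L) by rewrite /L; solve_uniq.
have L_path : path (relpre w A) m L.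
  rewrite /L -cat_cons catA cat_path path_chord //.
  rewrite last_cat /= last_iota /= ext_next ext_vP ?andbT (_ : a + (i - a) = i) //; nat_lia.
have L_size : size L = k by rewrite /L; solve_size.
have := ext_adjacent uniq_z L_bd L_uniq L_path L_size.
by rewrite /L last_cat /= last_cat /= ext_next ext_vP //; nat_lia.
Qed.

Lemma adj_out_far j : A z (vP j) -> j + (k - 1) <= n -> adjacent A (vP (j + (k - 1))) z.
Proof.
move=> aj jn.
set L := j :: iota j.+1 (k - 1).
have L_bd : all (fun i => i < n.+1 + size [:: z]) (n.+1 :: L) by rewrite /L; solve_all.
have L_uniq : uniq (n.+1 :: L) by rewrite /L; solve_uniq.
have L_path : path (relpre w A) n.+1 L.
  by rewrite /L /= ext_next ext_vP ?aj ?path_iota_vP //; nat_lia.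
have L_size : size L = k by rewrite /L; solve_size.
have := ext_adjacent uniq_z L_bd L_uniq L_path L_size.
by rewrite /L /= last_iota ext_next ext_vP // adjacentC.
Qed.

Lemma adj_in_far i : A (vP i) z -> k - 1 <= i -> i <= n -> adjacent A (vP (i - (k - 1))) z.
Proof.
move=> ai ki hi.
set L := iota (i - (k - 1)).+1 (k - 1) ++ [:: n.+1].
have L_bd : all (fun i => i < n.+1 + size [:: z]) (i - (k - 1) :: L) by rewrite /L; solve_all.
have L_uniq : uniq (i - (k - 1) :: L) by rewrite /L; solve_uniq.
have L_path : path (relpre w A) (i - (k - 1)) L.
  rewrite /L cat_path path_iota_vP /= ?last_iota; last nat_lia.
  by rewrite ext_next ext_vP ?andbT (_ : i - (k - 1) + (k - 1) = i) //; nat_lia.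
have L_size : size L = k by rewrite /L; solve_size.
have := ext_adjacent uniq_z L_bd L_uniq L_path L_size.
by rewrite /L last_cat /= ext_next ext_vP //; nat_lia.
Qed.

(* In the next two lemmas the arcs at z close a k-path between two vertices of P whose indices
   have the same parity, and such vertices are not adjacent. *)
Lemma no_in_out_detour i a : A (vP i) z -> A z (vP i.+1) -> a <= i -> a <= k - 2 ->
  i.+1 + (k - 2 - a) <= n -> False.
Proof.
move=> ai aj ha hk hn.
set L := iota (i - a).+1 a ++ n.+1 :: i.+1 :: iota i.+2 (k - 2 - a).
have L_bd : all (fun i => i < n.+1 + size [:: z]) (i - a :: L) by rewrite /L; solve_all.
have L_uniq : uniq (i - a :: L) by rewrite /L; solve_uniq.
have L_path : path (relpre w A) (i - a) L.
  rewrite /L cat_path path_iota_vP /= ?last_iota; last nat_lia.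
  rewrite (_ : i - a + a = i); last nat_lia.
  by rewrite ext_next !ext_vP ?ai ?aj ?path_iota_vP //; nat_lia.
have L_size : size L = k by rewrite /L; solve_size.
have := ext_adjacent uniq_z L_bd L_uniq L_path L_size.
by rewrite /L last_cat /= last_iota !ext_vP ?vP_adjacent; nat_lia.
Qed.

Lemma no_in_out_skip i j : A (vP i) z -> A z (vP j) -> j + (k - 2) < i -> i <= n ->
  i %% 2 <> j %% 2 -> False.
Proof.
move=> ai aj hji hi hp.
set L := n.+1 :: j :: iota j.+1 (k - 2).
have L_bd : all (fun i => i < n.+1 + size [:: z]) (i :: L) by rewrite /L; solve_all.
have L_uniq : uniq (i :: L) by rewrite /L; solve_uniq.
have L_path : path (relpre w A) i L.
  by rewrite /L /= ext_next !ext_vP ?ai ?aj ?path_iota_vP //; nat_lia.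
have L_size : size L = k by rewrite /L; solve_size.
have := ext_adjacent uniq_z L_bd L_uniq L_path L_size.
by rewrite /L /= last_iota !ext_vP ?vP_adjacent; nat_lia.
Qed.

Lemma adj_out_sub2 j : A z (vP j) -> 2 <= j -> j <= n -> adjacent A (vP (j - 2)) z.
Proof.
move=> aj h2 hn; have [h4|h4] := leqP 4 j.
  by apply: (@adj_out_chord j n 2) => //; nat_lia.
by apply: (@adj_out_chord j k 0) => //; nat_lia.
Qed.

Lemma adj_out_sub4 j : A z (vP j) -> 4 <= j -> j <= n -> adjacent A (vP (j - 4)) z.
Proof. by move=> aj h4 hn; apply: (@adj_out_chord j n 0) => //; nat_lia. Qed.

Lemma adj_in_add2 i : A (vP i) z -> i + 2 <= n -> adjacent A (vP (i + 2)) z.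
Proof.
move=> ai hn; have [h4|h4] := leqP (i + 4) n.
  by apply: (@adj_in_chord i k 0) => //; nat_lia.
by apply: (@adj_in_chord i n 2) => //; nat_lia.
Qed.

Lemma adj_in_add4 i : A (vP i) z -> i + 4 <= n -> adjacent A (vP (i + 4)) z.
Proof. by move=> ai hn; apply: (@adj_in_chord i n 0) => //; nat_lia. Qed.

Lemma no_in_out_succ i : A (vP i) z -> A z (vP i.+1) -> i.+1 <= n -> False.
Proof.
move=> ai aj hn; have [h|h] := leqP i (k - 2).
  by apply: (@no_in_out_detour i i) => //; nat_lia.
by apply: (@no_in_out_detour i (k - 2)) => //; nat_lia.
Qed.

Lemma out_sub4 j : A z (vP j) -> 4 <= j -> j <= n -> A z (vP (j - 4)).
Proof.
move=> aj h4 hn; case/orP: (adj_out_sub4 aj h4 hn) => // a.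
by have := in_out_gap (_ : j - 4 <= n) hn a aj; nat_lia.
Qed.

Lemma in_add4 i : A (vP i) z -> i + 4 <= n -> A (vP (i + 4)) z.
Proof.
move=> ai hn; case/orP: (adj_in_add4 ai hn) => // a.
by have := in_out_gap (_ : i <= n) hn ai a; nat_lia.
Qed.

Lemma out_nbr_low j : A z (vP j) -> j <= n ->
  exists2 j', j' <= 3 & j' %% 2 = j %% 2 /\ A z (vP j').
Proof.
elim/ltn_ind: j => j IH aj hn.
have [h4|h4] := leqP 4 j; last by exists j; [nat_lia | split].
have [j' j'3 [pj' aj']] := IH (j - 4) ltac:(nat_lia) (out_sub4 aj h4 hn) ltac:(nat_lia).
by exists j' => //; split => //; nat_lia.
Qed.

Lemma in_nbr_high i : A (vP i) z -> i <= n ->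
  exists2 i', k - 1 <= i' <= n & i' %% 2 = i %% 2 /\ A (vP i') z.
Proof.
have [d] := ubnP (n - i); elim: d i => // d IH i hd ai hn.
have [h4|h4] := leqP (i + 4) n; last by exists i; [nat_lia | split].
have [i' i'_bd [pi' ai']] := IH (i + 4) ltac:(nat_lia) (in_add4 ai h4) h4.
by exists i' => //; split => //; nat_lia.
Qed.

Lemma adj_below_out j m : A z (vP j) -> j <= n -> m <= j -> m %% 2 = j %% 2 ->
  adjacent A (vP m) z.
Proof.
elim/ltn_ind: j => j IH aj hn hm hp.
have [->|ne] := eqVneq m j; first by rewrite /adjacent aj orbT.
case/orP: (adj_out_sub2 aj ltac:(nat_lia) hn) => a2; last by apply: (IH (j - 2)) => //; nat_lia.
have [->|ne2] := eqVneq m (j - 2); first by rewrite /adjacent a2.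
case/orP: (adj_out_sub4 aj ltac:(nat_lia) hn) => a4; last by apply: (IH (j - 4)) => //; nat_lia.
by have := in_out_gap (_ : j - 4 <= n) hn a4 aj; nat_lia.
Qed.

Lemma adj_above_in i m : A (vP i) z -> i <= m -> m <= n -> m %% 2 = i %% 2 ->
  adjacent A (vP m) z.
Proof.
have [d] := ubnP (n - i); elim: d i => // d IH i hd ai hm hn hp.
have [->|ne] := eqVneq m i; first by rewrite /adjacent ai.
case/orP: (adj_in_add2 ai ltac:(nat_lia)) => a2; first by apply: (IH (i + 2)) => //; nat_lia.
have [->|ne2] := eqVneq m (i + 2); first by rewrite /adjacent a2 orbT.
case/orP: (adj_in_add4 ai ltac:(nat_lia)) => a4; first by apply: (IH (i + 4)) => //; nat_lia.
by have := in_out_gap (_ : i <= n) (_ : i + 4 <= n) ai a4; nat_lia.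
Qed.

Lemma no_in_k1_out_3 : A (vP k.+1) z -> A z (vP 3) -> False.
Proof.
move=> ai aj; case/orP: (adj_out_sub2 aj isT ltac:(nat_lia)) => /= a1.
- have := adj_in_far ai ltac:(nat_lia) ltac:(nat_lia).
  rewrite (_ : k.+1 - (k - 1) = 2); last nat_lia.
  case/orP => a2; first by apply: (@no_in_out_succ 2) => //; nat_lia.
  by apply: (@no_in_out_succ 1) => //; nat_lia.
- by apply: (@no_in_out_skip k.+1 1) => //; nat_lia.
Qed.

Lemma no_in_k_out_2 : A (vP k) z -> A z (vP 2) -> False.
Proof.
move=> ai aj; case/orP: (adj_out_sub2 aj isT ltac:(nat_lia)) => /= a0.
- have := adj_in_far ai ltac:(nat_lia) ltac:(nat_lia).
  rewrite (_ : k - (k - 1) = 1); last nat_lia.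
  case/orP => a1; first by apply: (@no_in_out_succ 1) => //; nat_lia.
  by apply: (@no_in_out_succ 0) => //; nat_lia.
- by apply: (@no_in_out_skip k 0) => //; nat_lia.
Qed.

Lemma no_in_km1_out_1 : A (vP (k - 1)) z -> A z (vP 1) -> False.
Proof.
move=> ai aj; have := adj_in_far ai ltac:(nat_lia) ltac:(nat_lia).
rewrite (_ : k - 1 - (k - 1) = 0); last nat_lia.
case/orP => a0; first by apply: (@no_in_out_succ 0) => //; nat_lia.
have := adj_in_add2 ai ltac:(nat_lia); rewrite (_ : k - 1 + 2 = k.+1); last nat_lia.
case/orP => a1; first by apply: (@no_in_out_skip k.+1 1) => //; nat_lia.
have := adj_out_far aj ltac:(nat_lia); rewrite (_ : 1 + (k - 1) = k); last nat_lia.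
case/orP => a2; first by apply: (@no_in_out_skip k 0) => //; nat_lia.
by apply: (@no_in_out_succ (k - 1)) => //; rewrite (_ : (k - 1).+1 = k) //; nat_lia.
Qed.

Lemma no_in_km1_out_3 : A (vP (k - 1)) z -> A z (vP 3) -> False.
Proof.
move=> ai aj; case/orP: (adj_out_sub2 aj isT ltac:(nat_lia)) => /= a1; last exact: no_in_km1_out_1.
have := adj_out_far aj ltac:(nat_lia); rewrite (_ : 3 + (k - 1) = k.+2); last nat_lia.
case/orP => a2; last by have := in_out_gap (_ : k - 1 <= n) (_ : k.+2 <= n) ai a2; nat_lia.
have := adj_in_far ai ltac:(nat_lia) ltac:(nat_lia).
rewrite (_ : k - 1 - (k - 1) = 0); last nat_lia.
case/orP => a0; last by apply: (@no_in_out_skip k.+2 0) => //; nat_lia.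
have := adj_in_add2 ai ltac:(nat_lia); rewrite (_ : k - 1 + 2 = k.+1); last nat_lia.
case/orP => a3; first exact: no_in_k1_out_3.
by have := in_out_gap (_ : 0 <= n) (_ : k.+1 <= n) a0 a3; nat_lia.
Qed.

Lemma in_out_parity i j : i <= n -> j <= n -> A (vP i) z -> A z (vP j) -> i %% 2 = j %% 2.
Proof.
move=> hi hj ai aj; apply/eqP/negPn/negP => /eqP hp.
have [j' j'3 [pj' aj']] := out_nbr_low aj hj.
have [i' i'_bd [pi' ai']] := in_nbr_high ai hi.
have [skip|i'_le] := ltnP (j' + (k - 2)) i'.
  by apply: (no_in_out_skip ai' aj' skip) => //; nat_lia.
have [e|[e|e]] : i' = k - 1 \/ i' = k \/ i' = k.+1 by nat_lia.
all: subst i'.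
- have [e|e] : j' = 1 \/ j' = 3 by nat_lia.
  + by subst j'; exact: no_in_km1_out_1 ai' aj'.
  + by subst j'; exact: no_in_km1_out_3 ai' aj'.
- have e : j' = 2 by nat_lia.
  by subst j'; exact: no_in_k_out_2 ai' aj'.
- have e : j' = 3 by nat_lia.
  by subst j'; exact: no_in_k1_out_3 ai' aj'.
Qed.

Lemma nbr_parity i j m : i <= n -> j <= n -> A (vP i) z -> A z (vP j) ->
  m <= n -> adjacent A (vP m) z -> m %% 2 = j %% 2.
Proof.
move=> hi hj ai aj hm /orP[a|a]; first exact: in_out_parity a aj.
by rewrite -(in_out_parity hi hm ai a); exact: in_out_parity ai aj.
Qed.

Lemma adj_corners i j : i <= n -> j <= n -> A (vP i) z -> A z (vP j) ->
  [/\ adjacent A (vP (j %% 2)) z, adjacent A (vP (j %% 2 + 2)) z,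
      adjacent A (vP (k - 1 + j %% 2)) z & adjacent A (vP (k + 1 + j %% 2)) z].
Proof.
move=> hi hj ai aj.
have [j' j'3 [pj' aj']] := out_nbr_low aj hj.
have [i' i'_bd [pi' ai']] := in_nbr_high ai hi.
have pij := in_out_parity hi hj ai aj.
have a_low : adjacent A (vP (j %% 2)) z by apply: (adj_below_out aj') => //; nat_lia.
have a_high : adjacent A (vP (k + 1 + j %% 2)) z by apply: (adj_above_in ai') => //; nat_lia.
split => //.
- case/orP: a_high => a; last by apply: (adj_below_out a) => //; nat_lia.
  have := adj_in_far a ltac:(nat_lia) ltac:(nat_lia).
  by rewrite (_ : k + 1 + j %% 2 - (k - 1) = j %% 2 + 2) //; nat_lia.
- case/orP: a_low => a; first by apply: (adj_above_in a) => //; nat_lia.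
  by have := adj_out_far a ltac:(nat_lia); rewrite addnC.
Qed.

End OutsideVertex.

Section OutsidePair.
Variables x y : T.
Hypotheses (x_notin : x \notin u :: p) (y_notin : y \notin u :: p) (xy : x != y).

Local Notation w := (ext [:: x; y]).

Lemma uniq_xy : uniq (u :: p ++ [:: x; y]).
Proof.
apply: ext_uniq; last by rewrite /= andbT inE.
by rewrite disjoint_sym disjoint_has /= orbF negb_or x_notin.
Qed.

Lemma adj_through_vP i j : A x (vP j) -> A (vP i) y -> i = j + (k - 2) -> i <= n ->
  adjacent A x y.
Proof.
move=> aj ai ei hn; subst i.
set L := j :: iota j.+1 (k - 2) ++ [:: n.+2].
have L_bd : all (fun i => i < n.+1 + size [:: x; y]) (n.+1 :: L) by rewrite /L; solve_all.
have L_uniq : uniq (n.+1 :: L) by rewrite /L; solve_uniq.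
have L_path : path (relpre w A) n.+1 L.
  rewrite /L /= cat_path path_iota_vP /= ?last_iota; last nat_lia.
  by rewrite ext_next ext_next2 !ext_vP ?aj ?ai //; nat_lia.
have L_size : size L = k by rewrite /L; solve_size.
have := ext_adjacent uniq_xy L_bd L_uniq L_path L_size.
by rewrite /L /= last_cat /= ext_next ext_next2.
Qed.

Lemma adj_arc_out_far j : A x y -> A y (vP j) -> j + (k - 2) <= n ->
  adjacent A (vP (j + (k - 2))) x.
Proof.
move=> axy aj hn.
set L := n.+2 :: j :: iota j.+1 (k - 2).
have L_bd : all (fun i => i < n.+1 + size [:: x; y]) (n.+1 :: L) by rewrite /L; solve_all.
have L_uniq : uniq (n.+1 :: L) by rewrite /L; solve_uniq.
have L_path : path (relpre w A) n.+1 L.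
  by rewrite /L /= ext_next ext_next2 !ext_vP ?axy ?aj ?path_iota_vP //; nat_lia.
have L_size : size L = k by rewrite /L; solve_size.
have := ext_adjacent uniq_xy L_bd L_uniq L_path L_size.
by rewrite /L /= last_iota ext_next ext_vP // adjacentC.
Qed.

Lemma no_arc_same_parity ix jx jy : ix <= n -> jx <= n -> A (vP ix) x -> A x (vP jx) ->
  jy <= n -> A y (vP jy) -> jx %% 2 = jy %% 2 -> ~~ A x y.
Proof.
move=> hix hjx aix ajx hjy ajy pxy; apply/negP => axy.
have [j' j'3 [pj' aj']] := out_nbr_low y_notin ajy hjy.
have far_n : j' + (k - 2) <= n by nat_lia.
have := nbr_parity x_notin hix hjx aix ajx far_n (adj_arc_out_far axy aj' far_n).
by nat_lia.
Qed.

End OutsidePair.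

Lemma adj_even_odd x y ix jx iy jy : x \notin u :: p -> y \notin u :: p -> x != y ->
  ix <= n -> jx <= n -> A (vP ix) x -> A x (vP jx) ->
  iy <= n -> jy <= n -> A (vP iy) y -> A y (vP jy) -> jx %% 2 = 0 -> jy %% 2 = 1 ->
  adjacent A x y.
Proof.
move=> x_notin y_notin xy hix hjx aix ajx hiy hjy aiy ajy px py; apply/negPn/negP => nadj.
have yx : y != x by rewrite eq_sym.
have no_x2_yk : A x (vP 2) -> A (vP k) y -> False.
  by move=> a1 a2; case/negP: nadj; apply: (adj_through_vP x_notin y_notin xy a1 a2); nat_lia.
have no_y3_xk1 : A y (vP 3) -> A (vP k.+1) x -> False.
  move=> a1 a2; case/negP: nadj; rewrite adjacentC.
  by apply: (adj_through_vP y_notin x_notin yx a1 a2); nat_lia.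
have no_y1_xkm1 : A y (vP 1) -> A (vP (k - 1)) x -> False.
  move=> a1 a2; case/negP: nadj; rewrite adjacentC.
  by apply: (adj_through_vP y_notin x_notin yx a1 a2); nat_lia.
have no_x4_yk2 : A x (vP 4) -> A (vP k.+2) y -> False.
  by move=> a1 a2; case/negP: nadj; apply: (adj_through_vP x_notin y_notin xy a1 a2); nat_lia.
have [] := adj_corners x_notin hix hjx aix ajx.
rewrite px add0n !addn0 addn1 => _ x2 x3 x1.
have [] := adj_corners y_notin hiy hjy aiy ajy.
rewrite py !addn1 -[1 + 2]/3 (_ : (k - 1).+1 = k) => [y1 y3 y2 y4|]; last nat_lia.
have pix : ix %% 2 = 0 by rewrite (in_out_parity x_notin hix hjx aix ajx).
have [j' j'3 [pj' aj']] := out_nbr_low y_notin ajy hjy.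
have gap_x := in_out_gap x_notin; have gap_y := in_out_gap y_notin.
case: (boolP (A x (vP 2))) => [x_2|nx_2].
- have y_k : A y (vP k) by case/orP: y2 => // a; case: (no_x2_yk x_2 a).
  have y_1 : A y (vP 1).
    by case/orP: y1 => // a; have := gap_y 1 k ltac:(nat_lia) ltac:(nat_lia) a y_k; nat_lia.
  have x_km1 : A x (vP (k - 1)) by case/orP: x3 => // a; case: (no_y1_xkm1 y_1 a).
  case/orP: y3 => a3.
  + have k5 : k = 5 by have := gap_y 3 k ltac:(nat_lia) ltac:(nat_lia) a3 y_k; nat_lia.
    case/orP: y4 => a; last by have := gap_y 3 k.+2 ltac:(nat_lia) (leqnn _) a3 a; nat_lia.
    by apply: no_x4_yk2 a; rewrite (_ : 4 = k - 1) //; nat_lia.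
  + have x_k1 : A x (vP k.+1) by case/orP: x1 => // a; case: (no_y3_xk1 a3 a).
    have := gap_x ix k.+1 hix ltac:(nat_lia) aix x_k1 => gap.
    have [e|e] : ix = k - 1 \/ ix = k.+1 by nat_lia.
    * by apply: (no_y1_xkm1 y_1); rewrite -e.
    * by apply: (no_y3_xk1 a3); rewrite -e.
- have x_2 : A (vP 2) x by case/orP: x2 => // a; rewrite a in nx_2.
  have x_k1 : A (vP k.+1) x.
    by case/orP: x1 => // a; have := gap_x 2 k.+1 ltac:(nat_lia) ltac:(nat_lia) x_2 a; nat_lia.
  have ny_3 : ~~ A y (vP 3) by apply/negP => a; apply: (no_y3_xk1 a x_k1).
  have y_3 : A (vP 3) y by case/orP: y3 => // a; rewrite a in ny_3.
  have y_1 : A y (vP 1).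
    have [e|e] : j' = 1 \/ j' = 3 by nat_lia.
      by rewrite -e.
    by move: ny_3; rewrite -e aj'.
  have x_km1 : A x (vP (k - 1)) by case/orP: x3 => // a; case: (no_y1_xkm1 y_1 a).
  have k5 : k = 5 by have := gap_x 2 (k - 1) ltac:(nat_lia) ltac:(nat_lia) x_2 x_km1; nat_lia.
  case/orP: y4 => a; last by have := gap_y 3 k.+2 ltac:(nat_lia) (leqnn _) y_3 a; nat_lia.
  by apply: no_x4_yk2 a; rewrite (_ : 4 = k - 1) //; nat_lia.
Qed.

Definition two_sided : {set T} :=
  [set z | [&& z \notin u :: p, [exists i : 'I_n.+1, A (vP i) z]
             & [exists j : 'I_n.+1, A z (vP j)]]].

Definition even_out z := [exists j : 'I_n.+1, A z (vP j) && (j %% 2 == 0)].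

Lemma two_sided_nbrs z : z \in two_sided ->
  [/\ z \notin u :: p, exists2 i, i <= n & A (vP i) z & exists2 j, j <= n & A z (vP j)].
Proof.
rewrite inE => /and3P[z_notin /existsP[i ai] /existsP[j aj]].
by split => //; [exists i | exists j]; rewrite // -ltnS.
Qed.

Lemma not_dom_in z : ~~ dom A [set z] [set x | x \in u :: p] -> [exists i : 'I_n.+1, A (vP i) z].
Proof.
case/forallPn => x; rewrite negb_imply in_set1 => /andP[/eqP -> ].
case/forallPn => y; rewrite negb_imply negbK inE => /andP[/vP_of_mem[i hi ->] ai].
by apply/existsP; exists (Ordinal (hi : i < n.+1)).
Qed.

Lemma not_dom_out z : ~~ dom A [set x | x \in u :: p] [set z] -> [exists j : 'I_n.+1, A z (vP j)].
Proof.
case/forallPn => x; rewrite negb_imply inE => /andP[/vP_of_mem[j hj ->]].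
case/forallPn => y; rewrite negb_imply negbK in_set1 => /andP[/eqP -> aj].
by apply/existsP; exists (Ordinal (hj : j < n.+1)).
Qed.

Lemma even_outE z i j : z \notin u :: p -> i <= n -> j <= n -> A (vP i) z -> A z (vP j) ->
  even_out z = (j %% 2 == 0).
Proof.
move=> z_notin hi hj ai aj; apply/existsP/eqP => [[j' /andP[aj' /eqP pj']]|pj].
  have hj' : j' <= n by rewrite -ltnS.
  have := nbr_parity z_notin hi hj ai aj hj'.
  by rewrite /adjacent aj' orbT pj' => /(_ isT) /esym.
by exists (Ordinal (hj : j < n.+1)); rewrite /= aj pj.
Qed.

Hypothesis A_irr : irreflexive A.

Lemma two_sided_no_arc x y : x \in two_sided -> y \in two_sided ->
  even_out x = even_out y -> ~~ A x y.
Proof.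
move=> /two_sided_nbrs[x_notin [ix hix aix] [jx hjx ajx]].
move=> /two_sided_nbrs[y_notin [iy hiy aiy] [jy hjy ajy]].
have [<-|xy] := eqVneq x y; first by rewrite A_irr.
rewrite (even_outE x_notin hix hjx aix ajx) (even_outE y_notin hiy hjy aiy ajy) => pxy.
apply: (no_arc_same_parity x_notin y_notin xy hix hjx aix ajx hjy ajy).
by move: pxy; rewrite !modn2; case: (odd jx); case: (odd jy).
Qed.

Lemma two_sided_adjacent x y : x \in two_sided -> y \in two_sided ->
  even_out x -> ~~ even_out y -> adjacent A x y.
Proof.
move=> xB yB ex ey.
have xy : x != y by apply: contraTneq ex => ->.
move: xB yB ex ey => /two_sided_nbrs[x_notin [ix hix aix] [jx hjx ajx]].
move=> /two_sided_nbrs[y_notin [iy hiy aiy] [jy hjy ajy]].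
rewrite (even_outE x_notin hix hjx aix ajx) (even_outE y_notin hiy hjy aiy ajy) => /eqP px py.
apply: (adj_even_odd x_notin y_notin xy hix hjx aix ajx hiy hjy aiy ajy px).
by move: py; rewrite modn2; case: (odd jy).
Qed.

Lemma two_sided_bipartite : semicomplete_bipartite A two_sided.
Proof.
exists [set z in two_sided | even_out z], [set z in two_sided | ~~ even_out z]; split.
- by apply/setP => z; rewrite !inE; case: (even_out z); rewrite /= ?andbT ?andbF ?orbF.
- by rewrite -setI_eq0; apply/eqP/setP => z; rewrite !inE; case: (even_out z); rewrite /= ?andbF.
- move=> x y /setIdP[xB ex] /setIdP[yB ey].
  by apply: two_sided_no_arc; rewrite ?ex ?ey.
- move=> x y /setIdP[xB ex] /setIdP[yB ey].
  by apply: two_sided_no_arc => //; rewrite (negbTE ex) (negbTE ey).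
- by move=> x y /setIdP[xB ex] /setIdP[yB ey]; apply: two_sided_adjacent.
Qed.

End ShortestPath.

Theorem lemma2p14 (T : finType) (A : rel T) (k : nat) (u v : T) (p : seq T) :
  irreflexive A ->
  odd k -> 5 <= k ->
  strong A -> k_quasi_transitive A k ->
  diam_ge A k.+2 ->
  is_dist A u v k.+2 ->
  shortest_path A u v p ->
  let VP : {set T} := [set x | x \in u :: p] in
  let I : {set T} := [set x | (x \notin VP) && dom A [set x] VP] in
  let W : {set T} := [set x | (x \notin VP) && dom A VP [set x]] in
  let B : {set T} := ~: (VP :|: I :|: W) in
  semicomplete_bipartite A VP ->
  semicomplete_bipartite A B \/ empty_digraph A B.
Proof.
move=> A_irr k_odd k_ge5 _ kqt _ dist_uv p_shortest VP I W B VP_bip; left.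
have size_p := shortest_path_size dist_uv p_shortest.
apply: semicomplete_bipartite_subset
  (two_sided_bipartite kqt p_shortest size_p k_odd k_ge5 VP_bip A_irr).
apply/subsetP => z; rewrite !inE => /norP[/norP[z_notin not_in] not_out].
have {}z_notin : z \notin u :: p by [].
rewrite z_notin /= in not_in not_out.
by rewrite z_notin (not_dom_in size_p not_in) (not_dom_out size_p not_out).
Qed.
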